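(* Let $C$ be a saturated set of atomic constraints and let $I$ be a set of refinement variables. Let $\theta$ be a solution of the restriction $C|_I$. Then there is a solution $\theta'$ of $C$ such that $\theta'(X)(d) = \theta(X)(d)$ for all $X \in I$ and all datatypes $d$.
   Context: Fix a finite set $\underline{D}$ of datatype identifiers. Each $d \in \underline{D}$ has a finite set $\mathrm{Con}(d)$ of constructors. There is a countable supply of refinement variables $X, Y, Z, \dots$. An assignment $\theta$ maps each refinement variable $X$ to a function that sends each $d \in \underline{D}$ to a subset $\theta(X)(d) \subseteq \mathrm{Con}(d)$. A constructor set expression over $d$ is either a finite set $\{k_1,\dots,k_m\} \subseteq \mathrm{Con}(d)$ or a pair $X(d)$. Its meaning is $\theta[\![X(d)]\!] = \theta(X)(d)$ and $\theta[\![\{k_1,\dots,k_m\}]\!] = \{k_1,\dots,k_m\}$. An inclusion $S_1 \subseteq S_2$ relates two expressions over the same $d$, and $k \in S$ abbreviates $\{k\} \subseteq S$. A (conditional) constraint $\phi \mathbin{?} S_1 \subseteq S_2$ consists of a finite guard set $\phi$ of inclusions of the form $k \in X(d)$ together with a body $S_1 \subseteq S_2$. $\theta$ satisfies $\phi \mathbin{?} S_1 \subseteq S_2$ if the following holds: whenever $k \in \theta(X)(d)$ for all $k \in X(d)$ in $\phi$, then $\theta[\![S_1]\!] \subseteq \theta[\![S_2]\!]$. A solution of a set of constraints is an assignment satisfying all of them. A constraint is atomic if its body has one of the forms $X(d) \subseteq Y(d)$, $X(d) \subseteq \{k_1,\dots,k_m\}$, $k \in X(d)$, or $k \in \emptyset$.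 Conclusions of rules are converted to atomic form, as follows. A body $\{k_1,\dots,k_m\} \subseteq S$ becomes the bodies $k_i \in S$. A body $k \in \{k_1,\dots,k_m\}$ is dropped if $k$ is among the $k_i$, and becomes $k \in \emptyset$ otherwise. An atomic set $C$ is saturated if it is closed under the following rules: - (Transitivity) from $\phi \mathbin{?} S_1 \subseteq S_2$ and $\psi \mathbin{?} S_2 \subseteq S_3$, derive $\phi \cup \psi \mathbin{?} S_1 \subseteq S_3$; - (Satisfaction) from $\phi \mathbin{?} k \in X(d)$ and $\psi \cup \{k \in X(d)\} \mathbin{?} S_1 \subseteq S_2$, derive $\phi \cup \psi \mathbin{?} S_1 \subseteq S_2$; - (Weakening) from $\phi \mathbin{?} X(d) \subseteq Y(d)$ and $\psi \cup \{k \in Y(d)\} \mathbin{?} S_1 \subseteq S_2$, derive $\phi \cup \psi \cup \{k \in X(d)\} \mathbin{?} S_1 \subseteq S_2$. For a set $I$ of refinement variables, the restriction $C|_I$ is the set of those constraints in $C$ all of whose refinement variables (occurring in the guard or the body) lie in $I$. *)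

From HB Require Import structures.
From mathcomp Require Import all_boot.
From mathcomp Require Import finmap.
From Stdlib Require Lists.List.

Set Implicit Arguments.
Unset Strict Implicit.
Unset Printing Implicit Defensive.

Local Open Scope fset_scope.

Section Constraints.

(* Datatype identifiers: a finite type D; constructors of d: a finite type Con d. *)
Variable D : finType.
Variable Con : D -> finType.

Definition rvar := nat.

Definition assignment := rvar -> forall d : D, {set Con d}.

Inductive sexpr (d : D) : Type :=
  | SVar of rvar
  | SLit of {set Con d}.
Arguments SVar d X.
Arguments SLit {d} s.

Definition sem (th : assignment) (d : D) (S : sexpr d) : {set Con d} :=
  match S with SVar X => th X d | SLit s => s end.

Inductive body : Type := Incl (d : D) (S1 S2 : sexpr d).

(* Guard atoms  k \in X(d),  encoded as (X, (d; k)). *)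
Definition gatom : choiceType := (rvar * {d : D & Con d})%type.
Definition gatom_of (X : rvar) (d : D) (k : Con d) : gatom := (X, Tagged Con k).

(* A conditional constraint  phi ? S1 <= S2  with phi a finite set of guard atoms. *)
Record cstr : Type := Cstr { guard : {fset gatom}; cbody : body }.

Definition guard_holds (th : assignment) (a : gatom) : Prop :=
  tagged a.2 \in th a.1 (tag a.2).

Definition body_holds (th : assignment) (b : body) : Prop :=
  match b with Incl d S1 S2 => sem th S1 \subset sem th S2 end.

Definition satisfies (th : assignment) (c : cstr) : Prop :=
  (forall a, a \in guard c -> guard_holds th a) -> body_holds th (cbody c).

Definition solution (th : assignment) (C : cstr -> Prop) : Prop :=
  forall c, C c -> satisfies th c.

Definition mem_body (d : D) (k : Con d) (S : sexpr d) : body :=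
  Incl (SLit [set k]) S.

Definition atomic_body (b : body) : Prop :=
  match b with
  | Incl d (SVar _) _ => True
  | Incl d (SLit s) (SVar _) => exists k, s = [set k]
  | Incl d (SLit s) (SLit t) => (exists k, s = [set k]) /\ t = set0
  end.

Definition atomic (c : cstr) : Prop := atomic_body (cbody c).

Definition atomize_mem (d : D) (k : Con d) (S : sexpr d) : seq body :=
  match S with
  | SVar _ => [:: mem_body k S]
  | SLit t => if k \in t then [::] else [:: mem_body k (SLit set0)]
  end.

Definition atomize (b : body) : seq body :=
  match b with
  | Incl d (SVar X) S2 => [:: Incl (SVar d X) S2]
  | Incl d (SLit s) S2 => flatten [seq atomize_mem k S2 | k <- enum s]
  end.

(* "C contains the conclusion phi ? b", after conversion to atomic form. *)
Definition derives (C : cstr -> Prop) (phi : {fset gatom}) (b : body) : Prop :=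
  forall b', Stdlib.Lists.List.In b' (atomize b) -> C (Cstr phi b').

Definition saturated (C : cstr -> Prop) : Prop :=
  (forall (d : D) (phi psi : {fset gatom}) (S1 S2 S3 : sexpr d),
      C (Cstr phi (Incl S1 S2)) -> C (Cstr psi (Incl S2 S3)) ->
      derives C (phi `|` psi) (Incl S1 S3)) /\
  (forall (d : D) (k : Con d) (X : rvar) (phi psi : {fset gatom}) (b : body),
      C (Cstr phi (mem_body k (SVar d X))) ->
      C (Cstr (gatom_of X k |` psi) b) ->
      derives C (phi `|` psi) b) /\
  (forall (d : D) (k : Con d) (X Y : rvar) (phi psi : {fset gatom}) (b : body),
      C (Cstr phi (Incl (SVar d X) (SVar d Y))) ->
      C (Cstr (gatom_of Y k |` psi) b) ->
      derives C (phi `|` psi `|` [fset gatom_of X k]) b).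

Definition sexpr_vars (d : D) (S : sexpr d) : seq rvar :=
  match S with SVar X => [:: X] | SLit _ => [::] end.

Definition body_vars (b : body) : seq rvar :=
  match b with Incl d S1 S2 => sexpr_vars S1 ++ sexpr_vars S2 end.

Definition cstr_vars (c : cstr) : seq rvar :=
  [seq a.1 | a <- enum_fset (guard c)] ++ body_vars (cbody c).

Definition restrict (C : cstr -> Prop) (I : rvar -> Prop) : cstr -> Prop :=
  fun c => C c /\ (forall X, X \in cstr_vars c -> I X).

End Constraints.

From HB Require Import structures.
From mathcomp Require Import all_boot.
From mathcomp Require Import finmap.
From Stdlib Require Import ClassicalEpsilon.

Set Implicit Arguments.
Unset Strict Implicit.
Unset Printing Implicit Defensive.
Local Open Scope fset_scope.

(* Keep theta on I and, for Y outside I, put k into Y(d) exactly when k is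
   forced there: C contains psi ? S <= Y(d) with psi mentioning only
   I-variables and true under theta, S a literal or an I-variable, and
   k in theta[S].  Every constraint of C whose guard is over I and true under
   theta then holds for the extension, by transitivity through the forcing
   constraint.  A guard that is merely true under the extension is reduced to
   such a guard one non-I atom k in X(d) at a time: that atom is forced, and
   satisfaction (literal source) or weakening (source Z(d) with Z in I, adding
   the true atom k in Z(d)) trades it for the guard of the forcing constraint. *)

Definition classicb (P : Prop) : bool :=
  if excluded_middle_informative P then true else false.

Lemma classicbP (P : Prop) : reflect P (classicb P).
Proof. by rewrite /classicb; case: excluded_middle_informative => p; constructor. Qed.

Section Atomize.
Variables (D : finType) (Con : D -> finType).

Lemma atomize_set1 d (k : Con d) (S : sexpr Con d) :
  atomize (Incl (SLit [set k]) S) = atomize_mem k S.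
Proof. by rewrite /= enum_set1 /= cats0. Qed.

Lemma atomize_atomic (b : body Con) : atomic_body b -> atomize b = [:: b].
Proof.
case: b => d [X|s] [Y|t] //; first by case=> k ->; rewrite atomize_set1.
by case=> [[k ->] ->]; rewrite atomize_set1 /= in_set0.
Qed.

Lemma derives_atomic (C : cstr Con -> Prop) phi (b : body Con) :
  atomic_body b -> derives C phi b -> C (Cstr phi b).
Proof. by move=> /atomize_atomic atomize_b; apply; rewrite atomize_b; left. Qed.

End Atomize.

Section Extension.
Variables (D : finType) (Con : D -> finType).
Variables (C : cstr Con -> Prop) (I : rvar -> Prop) (th : assignment Con).

Definition sexpr_over d (S : sexpr Con d) : Prop :=
  if S is SVar X then I X else True.

Definition guard_over (phi : {fset gatom Con}) : Prop :=
  forall a, a \in phi -> I a.1.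

Definition guard_true (th0 : assignment Con) (phi : {fset gatom Con}) : Prop :=
  forall a, a \in phi -> guard_holds th0 a.

Lemma guard_overU phi psi :
  guard_over phi -> guard_over psi -> guard_over (phi `|` psi).
Proof. by move=> phiI psiI a; rewrite in_fsetU => /orP [/phiI|/psiI]. Qed.

Lemma guard_trueU th0 phi psi :
  guard_true th0 phi -> guard_true th0 psi -> guard_true th0 (phi `|` psi).
Proof. by move=> phi_th psi_th a; rewrite in_fsetU => /orP [/phi_th|/psi_th]. Qed.

Definition forced (Y : rvar) d (k : Con d) : Prop :=
  exists phi (S : sexpr Con d),
    [/\ C (Cstr phi (Incl S (SVar Con d Y))), guard_over phi, guard_true th phi,
        sexpr_over S & k \in sem th S].

Definition extension : assignment Con :=
  fun X d => if classicb (I X) then th X d else [set k | classicb (forced X k)].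

Lemma extension_agree X : I X -> forall d, extension X d = th X d.
Proof. by move=> XI d; rewrite /extension; case: classicbP. Qed.

Lemma in_extension X d (k : Con d) : ~ I X -> k \in extension X d <-> forced X k.
Proof.
by move=> nXI; rewrite /extension; case: classicbP => // _; rewrite inE; split=> /classicbP.
Qed.

Lemma sem_extension d (S : sexpr Con d) : sexpr_over S -> sem extension S = sem th S.
Proof. by case: S => [X|s] //= /extension_agree ->. Qed.

Lemma guard_true_extension phi :
  guard_over phi -> guard_true extension phi <-> guard_true th phi.
Proof.
move=> phiI; split=> phi_true [X [d k]] a_phi; have XI : I X := phiI _ a_phi;
  by move: (phi_true _ a_phi); rewrite /guard_holds /= extension_agree.
Qed.

Lemma restrict_over phi d (S1 S2 : sexpr Con d) :
  C (Cstr phi (Incl S1 S2)) -> guard_over phi -> sexpr_over S1 -> sexpr_over S2 ->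
  restrict C I (Cstr phi (Incl S1 S2)).
Proof.
move=> Cc phiI S1I S2I; split=> // X {Cc}; rewrite /cstr_vars mem_cat.
case/orP=> [/mapP [a /phiI aI ->] //|]; rewrite /= mem_cat.
case/orP; [case: S1 S1I => [Y|s] | case: S2 S2I => [Y|s]] => //= YI;
  by rewrite inE => /eqP ->.
Qed.

Hypothesis th_sol : solution th (restrict C I).

Lemma extension_propagate phi d (S1 S2 : sexpr Con d) k :
  C (Cstr phi (Incl S1 S2)) -> guard_over phi -> guard_true th phi ->
  sexpr_over S1 -> k \in sem th S1 -> k \in sem extension S2.
Proof.
move=> Cc phiI phi_true S1I k_S1; case: (classicbP (sexpr_over S2)) => [S2I|].
  rewrite sem_extension //.
  exact: (subsetP (th_sol (restrict_over Cc phiI S1I S2I) phi_true)).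
by case: S2 Cc => [Y|t] //= Cc nYI; apply/in_extension => //; exists phi, S1.
Qed.

Lemma extension_propagate_mem phi d (k : Con d) (S : sexpr Con d) :
  derives C phi (mem_body k S) -> guard_over phi -> guard_true th phi ->
  k \in sem extension S.
Proof.
rewrite /derives atomize_set1 => C_kS phiI phi_true.
have k_k : k \in sem th (SLit [set k]) by rewrite /= set11.
case: S C_kS => [Y|t] /= C_kS.
  exact: extension_propagate (C_kS _ (or_introl erefl)) phiI phi_true _ k_k.
case: ifP C_kS => // _ C_k0.
by have := extension_propagate (C_k0 _ (or_introl erefl)) phiI phi_true Logic.I k_k; rewrite /= in_set0.
Qed.

Hypothesis C_atomic : forall c, C c -> atomic c.
Hypothesis C_saturated : saturated C.

Lemma extension_holds phi (b : body Con) :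
  C (Cstr phi b) -> guard_over phi -> guard_true th phi -> body_holds extension b.
Proof.
case: b => d S1 S2 Cc phiI phi_true; apply/subsetP => k.
case: (classicbP (sexpr_over S1)) => [S1I|].
  by rewrite sem_extension // => /(extension_propagate Cc phiI phi_true S1I).
case: S1 Cc => [X|s] Cc /= nXI; last by case: nXI.
move=> /(in_extension _ nXI) [psi [S [C_SX psiI psi_true SI k_S]]].
have [trans _] := C_saturated.
have C_SS2 := trans _ _ _ _ _ _ C_SX Cc.
have psiphiI := guard_overU psiI phiI.
have psiphi_true := guard_trueU psi_true phi_true.
case: S C_SX SI k_S C_SS2 => [Z|s] C_SX SI k_S C_SS2.
  exact: extension_propagate (C_SS2 _ (or_introl erefl)) psiphiI psiphi_true SI k_S.
have [k' s_k'] := C_atomic C_SX.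
move: k_S C_SS2; rewrite /= s_k' in_set1 => /eqP <- C_kS2.
exact: extension_propagate_mem C_kS2 psiphiI psiphi_true.
Qed.

Lemma extension_guard_step phi (b : body Con) X d (k : Con d) :
  C (Cstr phi b) -> gatom_of X k \in phi -> ~ I X -> k \in extension X d ->
  exists psi, [/\ C (Cstr (psi `|` (phi `\ gatom_of X k)) b),
                  guard_over psi & guard_true th psi].
Proof.
move=> Cc a_phi nXI /(in_extension _ nXI) [psi [S [C_SX psiI psi_true SI k_S]]].
have [_ [satisf weaken]] := C_saturated.
have phiE : gatom_of X k |` (phi `\ gatom_of X k) = phi by rewrite fsetD1K.
have b_atomic : atomic_body b := C_atomic Cc.
case: S C_SX SI k_S => [Z|s] C_SX SI k_S.
  exists (psi `|` [fset gatom_of Z k]); split.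
  - rewrite fsetUAC; apply: derives_atomic b_atomic _.
    by apply: weaken C_SX _; rewrite phiE.
  - by apply: guard_overU psiI _ => a; rewrite inE => /eqP ->.
  - by apply: guard_trueU psi_true _ => a; rewrite inE => /eqP ->.
have [k' s_k'] := C_atomic C_SX.
move: k_S C_SX; rewrite /= s_k' in_set1 => /eqP <- C_kX.
exists psi; split=> //; apply: derives_atomic b_atomic _.
by apply: satisf C_kX _; rewrite phiE.
Qed.

Lemma extension_guard_elim (L : seq (gatom Con)) phi (b : body Con) :
  C (Cstr phi b) -> guard_true extension phi ->
  (forall a, a \in phi -> ~ I a.1 -> a \in L) ->
  exists psi, [/\ C (Cstr psi b), guard_over psi & guard_true th psi].
Proof.
elim: L phi => [|a L IH] phi Cc phi_true phiL.
  have phiI : guard_over phi.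
    by move=> a a_phi; case: (classicbP (I a.1)) => // /(phiL _ a_phi).
  by exists phi; split=> //; apply/guard_true_extension.
case: (classicbP (a \in phi /\ ~ I a.1)) => [[a_phi naI]|a_drop]; last first.
  apply: IH Cc phi_true _ => a' a'_phi na'I.
  case/predU1P: (phiL _ a'_phi na'I) => // a'a.
  by case: a_drop; rewrite -a'a.
move: a_phi naI (phi_true _ a_phi) phiL; case: a => X [d k] a_phi nXI k_X phiL.
have [psi [C_psi psiI psi_true]] := extension_guard_step Cc a_phi nXI k_X.
apply: IH C_psi _ _.
  apply: guard_trueU; first exact/guard_true_extension.
  by move=> a' /fsetD1P [_ /phi_true].
move=> a'; rewrite in_fsetU => /orP [/psiI a'I /(_ a'I) //|/fsetD1P [a'_ne a'_phi] na'I].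
by case/predU1P: (phiL _ a'_phi na'I) => // a'a; case/eqP: a'_ne.
Qed.

Lemma extension_solution : solution extension C.
Proof.
case=> phi b Cc phi_true.
have [psi [C_psi psiI psi_true]] :=
  extension_guard_elim (L := enum_fset phi) Cc phi_true (fun a a_phi _ => a_phi).
exact: extension_holds C_psi psiI psi_true.
Qed.

End Extension.

Theorem theorem9p3 (D : finType) (Con : D -> finType)
    (C : cstr Con -> Prop) (I : rvar -> Prop) (th : assignment Con) :
  (forall c, C c -> atomic c) ->
  saturated C ->
  solution th (restrict C I) ->
  exists th' : assignment Con,
    solution th' C /\ (forall X, I X -> forall d : D, th' X d = th X d).
Proof.
move=> C_atomic C_saturated th_sol.
exists (extension C I th); split; first exact: extension_solution.
exact: extension_agree.
Qed.
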